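(* Let $E$ be an IL FS encoder with $s$ states whose Kraft matrix is irreducible, and let $L_{\max}=\max_{z,x}L[f(z,x)]$. Let $x^n\in\mathcal{X}^n$ and $z_1\in\mathcal{Z}$, define $z_{i+1}=g(z_i,x_i)$ for $i=1,\dots,n$, and assume $x^n$ is cyclic with respect to $g$, i.e., $z_{n+1}=z_1$. Extend both sequences periodically, $x_{i+n}=x_i$, $z_{i+n}=z_i$. For $1\le\ell\le n$, let $\hat P$ be the empirical distribution on $\mathcal{Z}\times\mathcal{X}^\ell$ given by $$\hat P(z,w^\ell)=\frac1n\big|\{1\le i\le n:\ z_i=z,\ (x_i,x_{i+1},\dots,x_{i+\ell-1})=w^\ell\}\big|,$$ and let $\hat H(X_\ell\mid X^{\ell-1})$ be the conditional entropy (in bits) of the last coordinate given the first $\ell-1$ coordinates under the $\mathcal{X}^\ell$-marginal of $\hat P$. Then $$\frac1n\sum_{i=1}^n L[f(z_i,x_i)]\ \ge\ \hat H(X_\ell\mid X^{\ell-1})-\frac{2\log_2 s+(s-1)L_{\max}}{\ell}.$$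
   Context: A finite-state (FS) encoder is a quintuple $E=(\mathcal{X},\mathcal{Y},\mathcal{Z},f,g)$, where $\mathcal{X}$ is a finite source alphabet of size $\alpha$, $\mathcal{Y}$ is a finite set of binary strings (possibly containing the empty string, of length $0$), $\mathcal{Z}$ is a finite set of $s$ states, $f:\mathcal{Z}\times\mathcal{X}\to\mathcal{Y}$ is the output function and $g:\mathcal{Z}\times\mathcal{X}\to\mathcal{Z}$ is the next-state function. For $z\in\mathcal{Z}$ and $x^n=(x_1,\dots,x_n)\in\mathcal{X}^n$, set $z_1=z$, $z_{i+1}=g(z_i,x_i)$; write $g(z,x^n)=z_{n+1}$ and let $f(z,x^n)$ denote the binary string obtained by concatenating $f(z_1,x_1),\dots,f(z_n,x_n)$; its length is $L[f(z,x^n)]=\sum_{i=1}^n L[f(z_i,x_i)]$, where $L(\cdot)$ denotes the length of a binary string. The encoder is information lossless (IL) if for every $z\in\mathcal{Z}$ and every $n\ge1$, the map $x^n\mapsto (f(z,x^n),g(z,x^n))$ is injective on $\mathcal{X}^n$. The Kraft matrix of $E$ is the $s\times s$ nonnegative matrix $K$ with entries $K_{zz'}=\sum_{\{x\in\mathcal{X}:\ g(z,x)=z'\}}2^{-L[f(z,x)]}$ (an empty sum is $0$). *)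

From HB Require Import structures.
From mathcomp Require Import all_boot all_order all_algebra.
From mathcomp Require Import all_classical all_reals all_analysis.
Set Implicit Arguments. Unset Strict Implicit. Unset Printing Implicit Defensive.
Import Order.TTheory GRing.Theory Num.Theory.
Local Open Scope ring_scope.

Section FSEncoder.
Variables (X Z : finType).
Variables (f : Z -> X -> seq bool) (g : Z -> X -> Z).

Fixpoint grun (z : Z) (xs : seq X) : Z :=
  if xs is a :: xs' then grun (g z a) xs' else z.

Fixpoint frun (z : Z) (xs : seq X) : seq bool :=
  if xs is a :: xs' then f z a ++ frun (g z a) xs' else [::].

Definition info_lossless : Prop :=
  forall (z : Z) (n : nat) (u v : n.-tuple X),
    frun z u = frun z v -> grun z u = grun z v -> u = v.

Definition kraft_matrix (R : realType) : 'M[R]_#|Z| :=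
  \matrix_(i, j) \sum_(a : X | g (enum_val i) a == enum_val j)
                   (2%:R ^- size (f (enum_val i) a) : R).

Definition Lmax : nat := \max_(z : Z) \max_(a : X) size (f z a).
End FSEncoder.

Definition irreducible_mx (R : realType) (m : nat) (A : 'M[R]_m) : Prop :=
  forall i j : 'I_m, exists k : nat, 0 < (A ^+ k) i j.

Definition log2 (R : realType) (x : R) : R := ln x / ln 2%:R.

Section Empirical.
Variables (R : realType) (X Z : finType) (g : Z -> X -> Z).
Variables (n : nat) (x : nat -> X) (z1 : Z).

(* state sequence (0-indexed): zs i = z_{i+1} *)
Definition zs (i : nat) : Z := grun g z1 (mkseq x i).

Definition window (l i : nat) : seq X := mkseq (fun j => x (i + j)) l.

Definition Phat (l : nat) (z : Z) (w : l.-tuple X) : R :=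
  (#|[set i : 'I_n | (zs i == z) && (window l i == w)]|%:R) / n%:R.

Definition PhatX (l : nat) (w : l.-tuple X) : R := \sum_(z : Z) Phat z w.

Definition PhatPre (l : nat) (u : seq X) : R :=
  \sum_(w : l.-tuple X | take l.-1 w == u) PhatX w.

(* conditional entropy (bits) of last coordinate given first l-1,
   convention 0 log 0 = 0 *)
Definition Hcond (l : nat) : R :=
  - \sum_(w : l.-tuple X | 0 < PhatX w)
      PhatX w * log2 (PhatX w / PhatPre l (take l.-1 w)).
End Empirical.

(* Write h_k for n times the empirical entropy, in nats, of the cyclic k-blocks
   of x.  Submodularity of entropy and the shift invariance of cyclic block
   counts make k |-> h_k concave with h_0 = 0, so l (h_l - h_{l-1}) <= h_l, and
   h_l - h_{l-1} is n ln 2 times the empirical conditional entropy.  Gibbs'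
   inequality against the subprobability w |-> sum_z 2^-L[f(z,w)] / C, where C
   sums this over all l-blocks w, bounds h_l by n ln C plus ln 2 times the code
   length of all the cyclic l-blocks, which is l times the code length of x.
   Finally C <= s^2 2^((s-1) L_max): the Kraft sums T_m(z,z') over words of
   length m leading from z to z' are supermultiplicative and, the encoder being
   lossless, grow at most linearly in m; irreducibility provides a return word
   from z' to z of length < s, so T_l(z,z') 2^-((s-1) L_max) <= 1. *)

From HB Require Import structures.
From mathcomp Require Import all_boot all_order all_algebra.
From mathcomp Require Import all_classical all_reals all_analysis.
From mathcomp Require Import ring lra.
Set Implicit Arguments. Unset Strict Implicit. Unset Printing Implicit Defensive.
Import Order.TTheory GRing.Theory Num.Theory.
Local Open Scope ring_scope.

Lemma ln_le_subr1 (R : realType) (y : R) : 0 < y -> ln y <= y - 1.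
Proof.
move=> y_gt0; have := @le_ln1Dx R (y - 1); rewrite [1 + _]addrC subrK; apply.
by rewrite ltrBrDl subrr.
Qed.

Lemma sum_ln_le0 (R : realType) (n : nat) (r : 'I_n -> R) :
  (forall i, 0 < r i) -> \sum_i r i <= n%:R -> \sum_i ln (r i) <= 0.
Proof.
move=> r_gt0 r_sum; apply: le_trans (ler_sum _ (fun i _ => ln_le_subr1 (r_gt0 i))) _.
by rewrite sumrB sumr_const card_ord subr_le0.
Qed.

Lemma mulr_div_le (R : numFieldType) (c y : R) : 0 <= y -> c * (y / c) <= y.
Proof.
by have [->|c0] := eqVneq c 0; rewrite ?mul0r // mulrCA divff ?mulr1.
Qed.

Lemma sum_rot (R : nmodType) (n : nat) (F : nat -> R) : F n = F 0%N ->
  \sum_(i < n) F i.+1 = \sum_(i < n) F i.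
Proof.
case: n => [|m] Fn; first by rewrite !big_ord0.
by rewrite big_ord_recr /= Fn [RHS]big_ord_recl addrC.
Qed.

Lemma sum_periodic_shift (R : nmodType) (n j : nat) (F : nat -> R) :
  (forall i, F (i + n)%N = F i) -> \sum_(i < n) F (i + j)%N = \sum_(i < n) F i.
Proof.
move=> Fper; elim: j => [|j IH]; first by under eq_bigr do rewrite addn0.
rewrite -IH; under eq_bigr do rewrite addnS.
by apply: (@sum_rot _ n (fun i => F (i + j)%N)); rewrite addnC Fper add0n.
Qed.

Lemma concave_increment_le (R : realFieldType) (h : nat -> R) (l : nat) :
  (forall m, h m.+2 + h m <= 2 * h m.+1) -> l%:R * (h l - h l.-1) <= h l - h 0%N.
Proof.
move=> h_concave; case: l => [|l] /=; first by rewrite mul0r subrr.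
have incr_antitone k j : h (k + j)%N.+1 - h (k + j)%N <= h k.+1 - h k.
  elim: j => [|j IH]; first by rewrite addn0.
  by apply: le_trans IH; rewrite addnS; have := h_concave (k + j)%N; lra.
rewrite -(telescope_sumr h (leq0n l.+1)) big_mkord.
have -> : l.+1%:R * (h l.+1 - h l) = \sum_(k < l.+1) (h l.+1 - h l).
  by rewrite sumr_const card_ord mulr_natl.
apply: ler_sum => k _.
by have := incr_antitone k (l - k)%N; rewrite subnKC // -ltnS.
Qed.

Lemma natr_card_set (R : nzSemiRingType) (T : finType) (P : pred T) :
  (#|[set i : T | P i]|%:R : R) = \sum_(i : T) (P i)%:R.
Proof.
rewrite -sum1_card natr_sum big_mkcond /=; apply: eq_bigr => i _.
by rewrite inE; case: (P i).
Qed.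

Lemma sum_triple (R : nmodType) (A B C : finType) (F : A * B * C -> R) :
  \sum_t F t = \sum_a \sum_b \sum_c F (a, b, c).
Proof.
transitivity (\sum_(p : A * B) \sum_(c : C) F (p, c)).
  by rewrite pair_bigA; apply: eq_bigr => -[].
by rewrite [RHS]pair_bigA; apply: eq_bigr => -[].
Qed.

Lemma invr2X_gt0 (R : realFieldType) k : (0 : R) < 2%:R ^- k.
Proof. by rewrite invr_gt0 exprn_gt0 ?ltr0n. Qed.

Lemma invr2X_ge0 (R : realFieldType) k : (0 : R) <= 2%:R ^- k.
Proof. exact/ltW/invr2X_gt0. Qed.

Lemma ler_invr2X (R : realFieldType) k m : (k <= m)%N -> (2%:R ^- m : R) <= 2%:R ^- k.
Proof.
by move=> km; rewrite lef_pV2 ?posrE ?exprn_gt0 ?ltr0n // ler_eXn2l ?ltr1n.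
Qed.

Lemma bernoulli_ineq (R : realFieldType) (d : R) j :
  0 <= d -> 1 + j%:R * d <= (1 + d) ^+ j.
Proof.
move=> d_ge0; elim: j => [|j IH]; first by rewrite mul0r addr0 expr0.
rewrite exprS -addn1 natrD; have j_ge0 : (0 : R) <= j%:R by rewrite ler0n.
apply: le_trans (_ : (1 + d) * (1 + j%:R * d) <= _); first by nra.
by rewrite ler_wpM2l // addr_ge0.
Qed.

Lemma le1_of_expr_linear_bound (R : archiFieldType) (c A : R) : 0 <= A ->
  (forall j : nat, c ^+ j <= j%:R * A + 1) -> c <= 1.
Proof.
move=> A_ge0 c_bound; rewrite leNgt; apply/negP => c_gt1.
(* With c = 1 + d, Bernoulli gives (1 + J d)^2 <= c^(2J) <= 2 J A + 1, which
   fails as soon as J d^2 > 2 A. *)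
have d_gt0 : 0 < c - 1 by rewrite subr_gt0.
have [J J_big] : exists J : nat, 2 * A < J%:R * ((c - 1) * (c - 1)).
  exists (Num.Def.archi_bound (2 * A / ((c - 1) * (c - 1)))).
  rewrite -ltr_pdivrMr ?mulr_gt0 //.
  by apply: archi_boundP; rewrite divr_ge0 ?mulr_ge0 // ltW.
have J_ge0 : (0 : R) <= J%:R by rewrite ler0n.
have := bernoulli_ineq J (ltW d_gt0); rewrite (addrC 1 (c - 1)) subrK => bern.
have := c_bound (J + J)%N; rewrite exprD natrD => cJJ.
have : (1 + J%:R * (c - 1)) ^+ 2 <= c ^+ J * c ^+ J.
  by rewrite expr2 ler_pM // addr_ge0 ?mulr_ge0 // ltW.
set d := c - 1 in d_gt0 J_big bern *; rewrite expr2 => sq.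
have : J%:R * (2 * A) <= J%:R * (J%:R * (d * d)) by rewrite ler_wpM2l // ltW.
have : J%:R * d <= 0 by nra.
have : J%:R * (d * d) <= 0 by rewrite mulrA; nra.
lra.
Qed.

Section EmpiricalEntropy.
Variables (R : realType) (n : nat).

Definition occ (T : eqType) (phi : nat -> T) (t : T) : R :=
  \sum_(j < n) (phi j == t)%:R.

(* n times the empirical entropy, in nats, of the sample phi 0, ..., phi n.-1 *)
Definition nentropy (T : eqType) (phi : nat -> T) : R :=
  \sum_(i < n) - ln (occ phi (phi i) / n%:R).

Lemma sum_by_occ (T : finType) (phi : nat -> T) (F : T -> R) :
  \sum_(i < n) F (phi i) = \sum_(t : T) occ phi t * F t.
Proof.
under [RHS]eq_bigr do rewrite mulr_suml.
rewrite exchange_big /=; apply: eq_bigr => i _.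
rewrite (bigD1 (phi i)) //= eqxx mul1r big1 ?addr0 // => t /negbTE.
by rewrite eq_sym => ->; rewrite mul0r.
Qed.

Lemma occ_ge0 (T : eqType) (phi : nat -> T) t : 0 <= occ phi t.
Proof. by apply: sumr_ge0 => j _; rewrite ler0n. Qed.

Lemma occ_self_gt0 (T : eqType) (phi : nat -> T) (i : 'I_n) :
  0 < occ phi (phi i).
Proof.
rewrite /occ (bigD1 i) //= eqxx ltr_pwDl //.
by apply: sumr_ge0 => j _; rewrite ler0n.
Qed.

Lemma sum_occ (T : finType) (phi : nat -> T) : \sum_(t : T) occ phi t = n%:R.
Proof.
rewrite -[n in n%:R]card_ord -sumr_const (sum_by_occ phi (fun=> 1)).
by apply: eq_bigr => t _; rewrite mulr1.
Qed.

Lemma sum_occ_pair_l (T1 T2 : finType) (phi : nat -> T1) (psi : nat -> T2) b :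
  \sum_(a : T1) occ (fun i => (phi i, psi i)) (a, b) = occ psi b.
Proof.
rewrite exchange_big /=; apply: eq_bigr => j _.
rewrite (bigD1 (phi j)) //= xpair_eqE eqxx /= big1 ?addr0 // => a /negbTE.
by rewrite xpair_eqE eq_sym => ->.
Qed.

Lemma sum_occ_pair_r (T1 T2 : finType) (phi : nat -> T1) (psi : nat -> T2) a :
  \sum_(b : T2) occ (fun i => (phi i, psi i)) (a, b) = occ phi a.
Proof.
rewrite exchange_big /=; apply: eq_bigr => j _.
rewrite (bigD1 (psi j)) //= xpair_eqE eqxx andbT big1 ?addr0 // => b /negbTE.
by rewrite xpair_eqE eq_sym => ->; rewrite andbF.
Qed.

Lemma sum_div_occ_le (T : finType) (phi : nat -> T) (F : T -> R) :
  (forall t, 0 <= F t) -> \sum_(i < n) F (phi i) / occ phi (phi i) <= \sum_t F t.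
Proof.
move=> F_ge0; rewrite (sum_by_occ phi (fun t => F t / occ phi t)).
by apply: ler_sum => t _; apply: mulr_div_le.
Qed.

Lemma occ_eq (T T' : eqType) (phi : nat -> T) (psi : nat -> T') (i : nat) :
  (forall j : 'I_n, (phi j == phi i) = (psi j == psi i)) ->
  occ phi (phi i) = occ psi (psi i).
Proof. by move=> same; apply: eq_bigr => j _; rewrite same. Qed.

Lemma nentropy_eq (T T' : eqType) (phi : nat -> T) (psi : nat -> T') :
  (forall i j : 'I_n, (phi j == phi i) = (psi j == psi i)) ->
  nentropy phi = nentropy psi.
Proof. by move=> same; apply: eq_bigr => i _; rewrite (@occ_eq _ _ phi psi i). Qed.

Lemma nentropy_rot (T : eqType) (phi : nat -> T) : phi n = phi 0%N ->
  nentropy (fun i => phi i.+1) = nentropy phi.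
Proof.
move=> phi_n; have occ_rot t : occ (fun i => phi i.+1) t = occ phi t.
  by rewrite /occ (@sum_rot _ _ (fun j => (phi j == t)%:R)) // phi_n.
rewrite /nentropy; under eq_bigr do rewrite occ_rot.
by rewrite (@sum_rot _ _ (fun i => - ln (occ phi (phi i) / n%:R))) // phi_n.
Qed.

Lemma natr_gt0_ord (i : 'I_n) : (0 : R) < n%:R.
Proof. by rewrite ltr0n (leq_ltn_trans _ (ltn_ord i)). Qed.

Lemma ln_freq (T : eqType) (phi : nat -> T) (i : 'I_n) :
  ln (occ phi (phi i) / n%:R) = ln (occ phi (phi i)) - ln n%:R.
Proof. by rewrite ln_div ?posrE ?occ_self_gt0 ?(natr_gt0_ord i). Qed.

Lemma nentropy_le_cross (T : finType) (phi : nat -> T) (q : T -> R) :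
  (forall t, 0 <= q t) -> \sum_t q t <= 1 -> (forall i : 'I_n, 0 < q (phi i)) ->
  nentropy phi <= \sum_(i < n) - ln (q (phi i)).
Proof.
move=> q_ge0 q_sum q_gt0.
pose r (i : 'I_n) := n%:R * q (phi i) / occ phi (phi i).
have r_gt0 i : 0 < r i by rewrite /r !mulr_gt0 ?invr_gt0 ?occ_self_gt0 ?(natr_gt0_ord i).
have : \sum_i ln (r i) <= 0.
  apply: sum_ln_le0 => //; rewrite /r.
  apply: le_trans (@sum_div_occ_le _ phi (fun t => n%:R * q t) _) _.
    by move=> t; rewrite mulr_ge0 ?ler0n.
  by rewrite -mulr_sumr ler_piMr ?ler0n.
have lnr i : ln (r i) = ln (q (phi i)) - ln (occ phi (phi i) / n%:R).
  have n_gt0 := natr_gt0_ord i.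
  by rewrite /r ln_freq ln_div ?lnM ?posrE ?mulr_gt0 ?occ_self_gt0 //; ring.
under eq_bigr do rewrite lnr.
by rewrite sumrB /nentropy !sumrN; lra.
Qed.

Lemma nentropy_submod (A B C : finType)
    (al : nat -> A) (be : nat -> B) (ga : nat -> C) :
  nentropy (fun i => (al i, be i, ga i)) + nentropy be
  <= nentropy (fun i => (al i, be i)) + nentropy (fun i => (be i, ga i)).
Proof.
set abc := fun i => (al i, be i, ga i).
set ab := fun i => (al i, be i); set bc := fun i => (be i, ga i).
pose r (i : 'I_n) :=
  occ ab (ab i) * occ bc (bc i) / occ be (be i) / occ abc (abc i).
have occ_gt0 i := (occ_self_gt0 ab i, occ_self_gt0 bc i, occ_self_gt0 be i,
  occ_self_gt0 abc i).
have r_gt0 i : 0 < r i by case: (occ_gt0 i) => [[[? ?] ?] ?]; rewrite !divr_gt0 ?mulr_gt0.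
pose F (t : A * B * C) := occ ab (t.1.1, t.1.2) * occ bc (t.1.2, t.2) / occ be t.1.2.
have sum_F : \sum_t F t <= n%:R.
  rewrite -(sum_occ be) sum_triple exchange_big /=; apply: ler_sum => b _.
  under eq_bigr do under eq_bigr do rewrite /F /= -mulrA.
  under eq_bigr do rewrite -mulr_sumr.
  by rewrite -!mulr_suml sum_occ_pair_l sum_occ_pair_r mulr_div_le ?occ_ge0.
have : \sum_i ln (r i) <= 0.
  apply: sum_ln_le0 => //; apply: le_trans sum_F.
  by apply: (@sum_div_occ_le _ abc F) => t; rewrite !(mulr_ge0, invr_ge0, occ_ge0).
have lnr i : ln (r i) = ln (occ ab (ab i) / n%:R) + ln (occ bc (bc i) / n%:R)
    - ln (occ be (be i) / n%:R) - ln (occ abc (abc i) / n%:R).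
  case: (occ_gt0 i) => [[[? ?] ?] ?].
  by rewrite !ln_freq !ln_div ?lnM ?posrE ?divr_gt0 ?mulr_gt0 //; ring.
under eq_bigr do rewrite lnr.
by rewrite !sumrB big_split /nentropy !sumrN /=; lra.
Qed.

End EmpiricalEntropy.

Section Windows.
Variables (X : finType) (x : nat -> X).

Lemma window_S k i : window x k.+1 i = x i :: window x k i.+1.
Proof.
rewrite /window /mkseq /= addn0; congr (_ :: _).
rewrite -[1%N]addn0 iotaDl -map_comp; apply: eq_map => j /=.
by rewrite add1n addnS addSn.
Qed.

Lemma window_rcons k i : window x k.+1 i = rcons (window x k i) (x (i + k)%N).
Proof. by rewrite /window mkseqS. Qed.

Lemma window_periodic n k i :
  (forall i, x (i + n)%N = x i) -> window x k (i + n) = window x k i.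
Proof. by move=> x_per; apply: eq_mkseq => j; rewrite addnAC x_per. Qed.

Definition window_tuple k i : k.-tuple X :=
  @Tuple k X (window x k i) (introT eqP (size_mkseq _ _)).

Lemma window_tuple_eq k i j :
  (window_tuple k i == window_tuple k j) = (window x k i == window x k j).
Proof. by rewrite -val_eqE. Qed.

End Windows.

Section BlockEntropy.
Variables (R : realType) (X : finType) (x : nat -> X) (n : nat).
Hypothesis x_periodic : forall i, x (i + n)%N = x i.

Definition hblock k := nentropy R n (window x k).

Lemma hblock0 : hblock 0 = 0.
Proof.
rewrite /hblock /nentropy big1 // => i _.
rewrite (_ : occ _ _ _ _ = n%:R) ?divff ?ln1 ?oppr0 ?lt0r_neq0 ?(natr_gt0_ord R i) //.
by rewrite /occ (eq_bigr (fun=> 1)) ?sumr_const ?card_ord.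
Qed.

Lemma hblock_rot k : nentropy R n (fun i => window x k i.+1) = hblock k.
Proof. by apply: nentropy_rot; rewrite -[n]add0n window_periodic. Qed.

(* Submodularity for (x_i, m-block at i+1, x_{i+m+1}), together with the
   invariance of block entropies under the cyclic shift by one. *)
Lemma hblock_concave m : hblock m.+2 + hblock m <= 2 * hblock m.+1.
Proof.
pose mid i := window_tuple x m i.+1.
have := nentropy_submod R n x mid (fun i => x (i.+1 + m)%N).
have -> : nentropy R n (fun i => (x i, mid i, x (i.+1 + m)%N)) = hblock m.+2.
  apply: nentropy_eq => i j /=.
  rewrite !(window_S _ m.+1) !(window_rcons _ m).
  by rewrite eqseq_cons eqseq_rcons !xpair_eqE window_tuple_eq andbA.
have -> : nentropy R n mid = hblock m.
  by rewrite -hblock_rot; apply: nentropy_eq => i j /=; rewrite window_tuple_eq.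
have -> : nentropy R n (fun i => (x i, mid i)) = hblock m.+1.
  apply: nentropy_eq => i j /=.
  by rewrite !(window_S _ m) eqseq_cons !xpair_eqE window_tuple_eq.
have -> : nentropy R n (fun i => (mid i, x (i.+1 + m)%N)) = hblock m.+1.
  rewrite -hblock_rot; apply: nentropy_eq => i j /=.
  by rewrite !(window_rcons _ m) eqseq_rcons !xpair_eqE window_tuple_eq.
lra.
Qed.

Lemma hblock_increment_le l : l%:R * (hblock l - hblock l.-1) <= hblock l.
Proof. by have := concave_increment_le l hblock_concave; rewrite hblock0 subr0. Qed.

End BlockEntropy.

Section ConditionalEntropy.
Variables (R : realType) (X Z : finType) (g : Z -> X -> Z).
Variables (n : nat) (x : nat -> X) (z1 : Z) (l : nat).
Hypothesis n_gt0 : (0 < n)%N.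
Hypothesis l_gt0 : (0 < l)%N.

Lemma PhatX_occ (w : l.-tuple X) :
  PhatX R g n x z1 w = occ R n (window_tuple x l) w / n%:R.
Proof.
rewrite /PhatX /Phat -mulr_suml; congr (_ / _).
under eq_bigr do rewrite natr_card_set.
rewrite exchange_big /=; apply: eq_bigr => i _.
rewrite (bigD1 (zs g x z1 i)) //= eqxx /= big1 ?addr0; first by rewrite -val_eqE.
by move=> z /negbTE; rewrite eq_sym => ->.
Qed.

Lemma take_window i : take l.-1 (window x l i) = window x l.-1 i.
Proof.
by case: l l_gt0 => // k _ /=; rewrite window_rcons -cats1 take_size_cat ?size_mkseq.
Qed.

Lemma PhatPre_occ i :
  PhatPre R g n x z1 l (take l.-1 (window_tuple x l i))
  = occ R n (window x l.-1) (window x l.-1 i) / n%:R.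
Proof.
set u := take l.-1 _.
transitivity (\sum_(w : l.-tuple X)
    occ R n (window_tuple x l) w * ((take l.-1 w == u)%:R / n%:R)).
  rewrite /PhatPre big_mkcond; apply: eq_bigr => w _; rewrite PhatX_occ.
  by case: ifP => _; rewrite /= ?mul0r ?mulr0 ?mul1r.
rewrite -(sum_by_occ n (window_tuple x l) (fun t => (take l.-1 t == u)%:R / n%:R)).
by rewrite -mulr_suml; congr (_ / _); apply: eq_bigr => j _; rewrite /u /= !take_window.
Qed.

Lemma Hcond_hblock :
  Hcond R g n x z1 l * (n%:R * ln 2%:R) = hblock R x n l - hblock R x n l.-1.
Proof.
have ln2_gt0 : (0 : R) < ln 2%:R by rewrite ln_gt0 ?ltr1n.
have nR_gt0 : (0 : R) < n%:R by rewrite ltr0n.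
pose L (w : l.-tuple X) :=
  log2 (PhatX R g n x z1 w / PhatPre R g n x z1 l (take l.-1 w)).
have -> : Hcond R g n x z1 l
    = - \sum_(w : l.-tuple X) occ R n (window_tuple x l) w * (L w / n%:R).
  rewrite /Hcond big_mkcond; congr (- _); apply: eq_bigr => w _.
  rewrite -/(L w) PhatX_occ; case: ifPn => [_|]; first by rewrite mulrAC mulrA.
  rewrite -leNgt pmulr_lle0 ?invr_gt0 // => occ_le0.
  suff -> : occ R n (window_tuple x l) w = 0 by rewrite mul0r.
  by apply/eqP; rewrite eq_le occ_le0 occ_ge0.
rewrite -(sum_by_occ n (window_tuple x l) (fun w => L w / n%:R)) /hblock /nentropy.
rewrite -sumrB -sumrN !mulr_suml; apply: eq_bigr => i _.
rewrite /L /log2 PhatX_occ PhatPre_occ.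
rewrite (@occ_eq R n _ _ (window_tuple x l) (window x l) i) => [|j]; last first.
  by rewrite window_tuple_eq.
have := (occ_self_gt0 R (window x l) i, occ_self_gt0 R (window x l.-1) i).
case=> p_l p_pre; rewrite ln_div ?posrE ?divr_gt0 //.
by field; rewrite !lt0r_neq0.
Qed.

End ConditionalEntropy.

Section Encoder.
Variables (R : realType) (X Z : finType) (f : Z -> X -> seq bool) (g : Z -> X -> Z).

Lemma grun_cat z s1 s2 : grun g z (s1 ++ s2) = grun g (grun g z s1) s2.
Proof. by elim: s1 z => //= a s IH z; rewrite IH. Qed.

Lemma frun_cat z s1 s2 :
  frun f g z (s1 ++ s2) = frun f g z s1 ++ frun f g (grun g z s1) s2.
Proof. by elim: s1 z => //= a s IH z; rewrite IH catA. Qed.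

Lemma size_f_le_Lmax z a : (size (f z a) <= Lmax f)%N.
Proof. exact: leq_trans (leq_bigmax a) (leq_bigmax z). Qed.

Lemma size_frun_le z s : (size (frun f g z s) <= size s * Lmax f)%N.
Proof.
elim: s z => //= a s IH z; rewrite size_cat mulSn.
exact: leq_add (size_f_le_Lmax z a) (IH _).
Qed.

(* The (z, z') entry of the m-th power of the Kraft matrix. *)
Definition kraft_sum m z z' : R :=
  \sum_(w : m.-tuple X) (grun g z w == z')%:R * 2%:R ^- size (frun f g z w).

Definition kraft_total m : R :=
  \sum_(w : m.-tuple X) \sum_(z : Z) 2%:R ^- size (frun f g z w).

Lemma kraft_total_gt0 m (z : Z) (w : m.-tuple X) : 0 < kraft_total m.
Proof.
have term_ge0 w' z' : (0 : R) <= 2%:R ^- size (frun f g z' w').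
  exact: invr2X_ge0.
rewrite /kraft_total (bigD1 w) //= ltr_pwDl ?sumr_ge0 // => [|w' _]; last first.
  by apply: sumr_ge0 => z' _.
by rewrite (bigD1 z) //= ltr_pwDl ?invr2X_gt0 ?sumr_ge0.
Qed.

Lemma kraft_sum_ge0 m z z' : 0 <= kraft_sum m z z'.
Proof. by apply: sumr_ge0 => w _; rewrite mulr_ge0 ?ler0n ?invr2X_ge0. Qed.

Lemma kraft_sum_ge_word z (w : seq X) :
  2%:R ^- (size w * Lmax f) <= kraft_sum (size w) z (grun g z w).
Proof.
rewrite /kraft_sum (bigD1 (in_tuple w)) //= eqxx mul1r.
apply: le_trans (ler_invr2X _ (size_frun_le z w)) _.
by rewrite lerDl; apply: sumr_ge0 => t _; rewrite mulr_ge0 ?ler0n ?invr2X_ge0.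
Qed.

Lemma kraft_sum_mul a b z z' z'' :
  kraft_sum a z z' * kraft_sum b z' z'' <= kraft_sum (a + b) z z''.
Proof.
rewrite /kraft_sum mulr_suml; under eq_bigr do rewrite mulr_sumr.
rewrite pair_bigA /=.
set F := fun w : (a + b).-tuple X =>
  (grun g z w == z'')%:R * (2%:R ^- size (frun f g z w) : R).
have F_ge0 w : 0 <= F w by rewrite mulr_ge0 ?ler0n ?invr2X_ge0.
pose cat2 (p : a.-tuple X * b.-tuple X) := cat_tuple p.1 p.2.
apply: le_trans (_ : \sum_p F (cat2 p) <= _).
  apply: ler_sum => -[u v] _; rewrite /F /= grun_cat frun_cat size_cat.
  case: eqP => [->|_]; last by rewrite !mul0r mulr_ge0 ?ler0n ?invr2X_ge0.
  case: (grun g z' v == z''); last by rewrite !mul0r mulr0.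
  by rewrite !mul1r exprD invfM.
have cat2_inj : injective cat2.
  move=> [u v] [u' v'] /(congr1 val) /eqP /=.
  by rewrite eqseq_cat ?size_tuple // => /andP[/eqP/val_inj -> /eqP/val_inj ->].
rewrite -(big_imset F (in2W cat2_inj)) [X in X <= _]big_mkcond /=.
by apply: ler_sum => w _; case: ifP.
Qed.

End Encoder.

Section InformationLossless.
Variables (R : realType) (X Z : finType) (f : Z -> X -> seq bool) (g : Z -> X -> Z).
Hypothesis f_IL : info_lossless f g.

Lemma card_words_codelength m z z' k :
  (#|[set w : m.-tuple X | (grun g z w == z') && (size (frun f g z w) == k)]|
    <= 2 ^ k)%N.
Proof.
set A := [set w : m.-tuple X | _].
pose code (w : m.-tuple X) : k.-tuple bool := insubd (nseq_tuple k false) (frun f g z w).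
have code_inj : {in A &, injective code}.
  move=> u v; rewrite !inE => /andP[/eqP gu /eqP su] /andP[/eqP gv /eqP sv] uv.
  apply: (f_IL (z := z)); last by rewrite gu gv.
  by move: (congr1 val uv); rewrite !val_insubd su sv eqxx.
rewrite -(card_in_imset code_inj).
by apply: leq_trans (max_card _) _; rewrite card_tuple card_bool.
Qed.

Lemma kraft_sum_le_linear m z z' :
  kraft_sum R f g m z z' <= (m * Lmax f).+1%:R.
Proof.
set M := (m * Lmax f).+1.
have split_codelength (w : m.-tuple X) :
    (grun g z w == z')%:R * (2%:R ^- size (frun f g z w) : R)
    = \sum_(k < M) ((grun g z w == z') && (size (frun f g z w) == k))%:R * 2%:R ^- k.
  have lt : (size (frun f g z w) < M)%N.
    by rewrite ltnS -{2}(size_tuple w) size_frun_le.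
  rewrite (bigD1 (Ordinal lt)) //= eqxx andbT big1 ?addr0 // => k /negbTE nk.
  suff -> : (size (frun f g z w) == k) = false by rewrite andbF mul0r.
  by apply: contraNF (negbT nk) => /eqP e; apply/eqP/val_inj.
rewrite /kraft_sum (eq_bigr _ (fun w _ => split_codelength w)) exchange_big /=.
apply: le_trans (_ : _ <= \sum_(k < M) (1 : R)) _; last by rewrite sumr_const card_ord.
apply: ler_sum => k _.
rewrite -mulr_suml -natr_card_set ler_pdivrMr ?exprn_gt0 ?ltr0n // mul1r -natrX ler_nat.
exact: card_words_codelength.
Qed.

(* Going around a cycle: the sums along it are supermultiplicative but grow at
   most linearly. *)
Lemma kraft_sum_cycle_le1 a b z z' :
  kraft_sum R f g a z z' * kraft_sum R f g b z' z <= 1.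
Proof.
set c := _ * _; set M := (a + b)%N.
have c_ge0 : 0 <= c by rewrite mulr_ge0 ?kraft_sum_ge0.
apply: (le1_of_expr_linear_bound (A := (M * Lmax f)%:R)) => [|j]; first by rewrite ler0n.
have c_pow : c ^+ j <= kraft_sum R f g (j * M) z z.
  elim: j => [|j IH].
    by have := @kraft_sum_ge_word R _ _ f g z [::]; rewrite /= expr0 invr1.
  rewrite exprSr mulSnr; apply: le_trans (@kraft_sum_mul R _ _ f g _ _ z z z).
  by apply: ler_pM; rewrite ?exprn_ge0 //; apply: kraft_sum_mul.
apply: le_trans c_pow (le_trans (kraft_sum_le_linear _ _ _) _).
by rewrite -addn1 natrD -mulnA natrM.
Qed.

End InformationLossless.

Section Irreducible.
Variables (R : realType) (X Z : finType) (f : Z -> X -> seq bool) (g : Z -> X -> Z).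

Definition next_state_rel := [rel z z' : Z | [exists a, g z a == z']].

Lemma path_word z p : path next_state_rel z p ->
  exists w : seq X, size w = size p /\ grun g z w = last z p.
Proof.
elim: p z => [|y p IH] z /=; first by exists [::].
case/andP=> /existsP[a /eqP gza] /IH[w [sw gw]].
by exists (a :: w); rewrite /= gza sw gw.
Qed.

Lemma connect_short_word z z' : connect next_state_rel z z' ->
  exists w : seq X, (size w < #|Z|)%N /\ grun g z w = z'.
Proof.
case/connectP=> p /shortenP[p' p'_path p'_uniq _] ->.
have [w [sw gw]] := path_word p'_path.
exists w; rewrite sw; split=> //.
by have := max_card (mem (z :: p')); rewrite (card_uniqP p'_uniq).
Qed.

Lemma kraft_matrix_ge0 i j : 0 <= kraft_matrix f g R i j.
Proof. by rewrite mxE; apply: sumr_ge0 => a _; apply: invr2X_ge0. Qed.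

Lemma kraft_matrix_pos_connect k i j : 0 < (kraft_matrix f g R ^+ k) i j ->
  connect next_state_rel (enum_val i) (enum_val j).
Proof.
set K := kraft_matrix f g R.
elim: k i j => [|k IH] i j.
  by rewrite expr0 mxE; case: eqVneq => [->|]; rewrite ?connect0 ?ltxx.
rewrite exprS -mulmxE mxE => sum_gt0.
case: (pickP (fun m => 0 < K i m * (K ^+ k) m j)) => [m Km_gt0|none]; last first.
  by move: sum_gt0; rewrite ltNge sumr_le0 // => m _; rewrite leNgt none.
have Kim_gt0 : 0 < K i m.
  rewrite lt_def kraft_matrix_ge0 andbT.
  by apply: contraTneq Km_gt0 => ->; rewrite mul0r ltxx.
apply: connect_trans (IH m j _); last by move: Km_gt0; rewrite pmulr_rgt0.
apply: connect1; apply: contraTT Kim_gt0 => /existsPn no_edge.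
by rewrite mxE big_pred0 ?ltxx // => a; apply: negbTE.
Qed.

Lemma irreducible_short_word : irreducible_mx (kraft_matrix f g R) ->
  forall z z', exists w : seq X, (size w < #|Z|)%N /\ grun g z w = z'.
Proof.
move=> K_irr z z'; have [k Kk_gt0] := K_irr (enum_rank z) (enum_rank z').
apply: connect_short_word.
by move: (kraft_matrix_pos_connect Kk_gt0); rewrite !enum_rankK.
Qed.

End Irreducible.

Section KraftBound.
Variables (R : realType) (X Z : finType) (f : Z -> X -> seq bool) (g : Z -> X -> Z).
Hypothesis f_IL : info_lossless f g.
Hypothesis K_irr : irreducible_mx (kraft_matrix f g R).

Lemma kraft_sum_le m z z' :
  kraft_sum R f g m z z' <= 2%:R ^+ ((#|Z| - 1) * Lmax f).
Proof.
have [w [w_short gw]] := irreducible_short_word K_irr z' z.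
have back_ge : 2%:R ^- (size w * Lmax f) <= kraft_sum R f g (size w) z' z.
  by rewrite -gw kraft_sum_ge_word.
have back_gt0 := lt_le_trans (invr2X_gt0 _ _) back_ge.
have : kraft_sum R f g m z z' <= (kraft_sum R f g (size w) z' z)^-1.
  by rewrite -[_^-1]mul1r ler_pdivlMr // kraft_sum_cycle_le1.
move/le_trans; apply; apply: le_trans (_ : (2%:R ^- (size w * Lmax f))^-1 <= _).
  by rewrite lef_pV2 ?posrE ?invr2X_gt0.
have w_le : (size w <= #|Z| - 1)%N.
  by rewrite subn1 -ltnS prednK // (leq_ltn_trans _ w_short).
by rewrite invrK ler_eXn2l ?ltr1n // leq_mul2r w_le orbT.
Qed.

Lemma kraft_total_le m :
  kraft_total R f g m <= #|Z|%:R ^+ 2 * 2%:R ^+ ((#|Z| - 1) * Lmax f).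
Proof.
have by_final_state z : \sum_(w : m.-tuple X) (2%:R ^- size (frun f g z w) : R)
    = \sum_z' kraft_sum R f g m z z'.
  rewrite /kraft_sum exchange_big /=; apply: eq_bigr => w _.
  rewrite (bigD1 (grun g z w)) //= eqxx mul1r big1 ?addr0 // => z' /negbTE.
  by rewrite eq_sym => ->; rewrite mul0r.
rewrite /kraft_total exchange_big (eq_bigr _ (fun z _ => by_final_state z)) /=.
apply: le_trans (ler_sum _ (fun z _ => ler_sum _ (fun z' _ => kraft_sum_le m z z'))) _.
by rewrite !sumr_const -mulrnA -[#|Z|%:R ^+ 2]natrX mulr_natl.
Qed.

Lemma log2_kraft_total_le m (z : Z) (w : m.-tuple X) :
  log2 (kraft_total R f g m) <= 2 * log2 (#|Z|%:R) + (#|Z| - 1)%:R * (Lmax f)%:R.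
Proof.
have s_gt0 : (0 : R) < #|Z|%:R by rewrite ltr0n; apply/card_gt0P; exists z.
have ln2_gt0 : (0 : R) < ln 2%:R by rewrite ln_gt0 ?ltr1n.
have := kraft_total_le m; rewrite -ler_ln ?posrE ?mulr_gt0 ?exprn_gt0 ?s_gt0 ?ltr0n
  ?(kraft_total_gt0 R f g z w) //.
rewrite lnM ?posrE ?exprn_gt0 ?s_gt0 ?ltr0n // !lnXn ?s_gt0 ?ltr0n //.
rewrite -(mulr_natr (ln (#|Z|%:R : R))) -(mulr_natr (ln (2%:R : R))) => ln_le.
rewrite /log2 ler_pdivrMr //.
rewrite (_ : _ * ln 2%:R = 2 * ln #|Z|%:R + ((#|Z| - 1) * Lmax f)%:R * ln 2%:R).
  lra.
by rewrite natrM; field; rewrite lt0r_neq0.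
Qed.

End KraftBound.

Section CyclicSource.
Variables (R : realType) (X Z : finType) (f : Z -> X -> seq bool) (g : Z -> X -> Z).
Variables (n : nat) (x : nat -> X) (z1 : Z).
Hypothesis x_periodic : forall i, x (i + n)%N = x i.
Hypothesis x_cyclic : zs g x z1 n = z1.

Lemma zsS i : zs g x z1 i.+1 = g (zs g x z1 i) (x i).
Proof. by rewrite /zs mkseqS -cats1 grun_cat. Qed.

Lemma zs_periodic i : zs g x z1 (i + n) = zs g x z1 i.
Proof.
elim: i => [|i IH]; first by rewrite add0n x_cyclic.
by rewrite addSn !zsS IH x_periodic.
Qed.

Lemma size_frun_window k i :
  size (frun f g (zs g x z1 i) (window x k i))
  = (\sum_(j < k) size (f (zs g x z1 (i + j)) (x (i + j))))%N.
Proof.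
elim: k i => [|k IH] i; first by rewrite big_ord0.
rewrite window_S /= -zsS size_cat IH big_ord_recl /= addn0; congr (_ + _)%N.
by apply: eq_bigr => j _; rewrite /bump /= add1n addnS.
Qed.

Lemma sum_codelength_windows l :
  \sum_(i < n) (size (frun f g (zs g x z1 i) (window x l i)))%:R
  = l%:R * \sum_(i < n) (size (f (zs g x z1 i) (x i)))%:R :> R.
Proof.
under eq_bigr do rewrite size_frun_window natr_sum.
pose F i := (size (f (zs g x z1 i) (x i)))%:R : R.
have F_periodic i : F (i + n)%N = F i by rewrite /F zs_periodic x_periodic.
rewrite exchange_big /=; under eq_bigr do rewrite (sum_periodic_shift _ F_periodic).
by rewrite sumr_const card_ord mulr_natl.
Qed.

(* Gibbs' inequality against the subprobability w |-> (sum_z 2^-L[f(z,w)]) / C. *)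
Lemma hblock_le_codelength l :
  hblock R x n l <= ln 2%:R * (n%:R * log2 (kraft_total R f g l)
    + l%:R * \sum_(i < n) (size (f (zs g x z1 i) (x i)))%:R).
Proof.
set C := kraft_total R f g l.
pose G (w : l.-tuple X) := \sum_(z : Z) (2%:R ^- size (frun f g z w) : R).
have G_gt0 w : 0 < G w.
  rewrite /G (bigD1 z1) //= ltr_pwDl ?invr2X_gt0 //.
  by apply: sumr_ge0 => z _; apply: invr2X_ge0.
have C_gt0 : 0 < C := kraft_total_gt0 R f g z1 (window_tuple x l 0).
have ln2_gt0 : (0 : R) < ln 2%:R by rewrite ln_gt0 ?ltr1n.
have codelength_bound (i : 'I_n) : - ln (G (window_tuple x l i) / C)
    <= ln C + (size (frun f g (zs g x z1 i) (window x l i)))%:R * ln 2%:R.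
  set k := size _.
  have G_ge : 2%:R ^- k <= G (window_tuple x l i).
    by rewrite /G (bigD1 (zs g x z1 i)) //= lerDl sumr_ge0 // => z _; apply: invr2X_ge0.
  move: G_ge; rewrite -ler_ln ?posrE ?invr2X_gt0 ?G_gt0 //.
  rewrite lnV ?posrE ?exprn_gt0 ?ltr0n // lnXn ?ltr0n // -(mulr_natr (ln (2%:R : R))).
  by rewrite ln_div ?posrE ?G_gt0 //; lra.
rewrite /hblock (@nentropy_eq R n _ _ _ (window_tuple x l)) => [|i j]; last first.
  by rewrite window_tuple_eq.
apply: le_trans (nentropy_le_cross (q := fun w => G w / C) _ _ _) _.
- by move=> w; rewrite divr_ge0 ?ltW.
- by rewrite -mulr_suml divff ?lt0r_neq0.
- by move=> i; rewrite divr_gt0.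
apply: le_trans (ler_sum _ (fun i _ => codelength_bound i)) _.
rewrite big_split /= sumr_const card_ord -mulr_suml sum_codelength_windows /log2.
rewrite le_eqVlt; apply/orP; left; apply/eqP; field; exact: lt0r_neq0.
Qed.

End CyclicSource.

Unset Implicit Arguments. Set Strict Implicit. Set Printing Implicit Defensive.

Theorem mainTheorem7 (R : realType) (X Z : finType)
  (f : Z -> X -> seq bool) (g : Z -> X -> Z)
  (HIL : info_lossless f g)
  (Hirr : irreducible_mx (kraft_matrix f g R))
  (n : nat) (x : nat -> X) (z1 : Z)
  (Hper : forall i, x (i + n) = x i)
  (Hcyc : zs g x z1 n = z1)
  (l : nat) (Hl1 : (1 <= l)%N) (Hln : (l <= n)%N) :
  (n%:R)^-1 * (\sum_(i < n) (size (f (zs g x z1 i) (x i)))%:R)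
  >= Hcond R g n x z1 l
     - (2 * log2 (#|Z|%:R : R) + (#|Z| - 1)%:R * (Lmax f)%:R) / l%:R.
Proof.
have n_gt0 : (0 < n)%N := leq_trans Hl1 Hln.
have nR_gt0 : (0 : R) < n%:R by rewrite ltr0n.
have lR_gt0 : (0 : R) < l%:R by rewrite ltr0n.
have ln2_gt0 : (0 : R) < ln 2%:R by rewrite ln_gt0 ?ltr1n.
have chain := @hblock_increment_le R _ x n Hper l.
have cond := @Hcond_hblock R _ _ g n x z1 l n_gt0 Hl1.
have gibbs := @hblock_le_codelength R _ _ f g n x z1 Hper Hcyc l.
have kraft := @log2_kraft_total_le R _ _ f g HIL Hirr l z1 (window_tuple x l 0).
set S := \sum_(i < n) _ in gibbs *; set B := 2 * log2 _ + _ in kraft *.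
set C := log2 _ in gibbs kraft; set H := Hcond _ _ _ _ _ _ in cond *.
rewrite -cond in chain.
have kraft_n : ln 2%:R * n%:R * C <= ln 2%:R * n%:R * B by rewrite ler_pM2l ?mulr_gt0.
have key : H * (n%:R * l%:R) <= n%:R * B + l%:R * S.
  by rewrite -(ler_pM2l ln2_gt0); lra.
rewrite lerBlDr (_ : _ + _ = (n%:R * B + l%:R * S) / (n%:R * l%:R)).
  by rewrite ler_pdivlMr ?mulr_gt0.
by field; rewrite !lt0r_neq0.
Qed.
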